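(* Let $\kappa$ be an infinite regular cardinal with $\kappa^{<\kappa}=\kappa$ and $\mathcal F$ a $(<\kappa)$-complete filter on $\kappa$. Then $\mathbb P(\mathcal F)$, with the orders $\langle\le_\zeta:\zeta<\kappa\rangle$, satisfies Mastering $\kappa$: for every dense $\mathcal D\subseteq\mathbb P(\mathcal F)$, every $p\in\mathbb P(\mathcal F)$ and every $\zeta<\kappa$ there are $q$ with $p\le_\zeta q$ and $\mathcal D'\subseteq\mathcal D$ with $|\mathcal D'|\le\kappa$ which is predense above $q$. Equivalently, whenever $p\Vdash$ ''$\dot\tau$ is an ordinal'' and $\zeta<\kappa$, there are $q\ge_\zeta p$ and a set of ordinals $X\in\mathbf V$ with $|X|\le\kappa$ such that $q\Vdash\dot\tau\in X$.
   Context: For a subtree $p\subseteq{}^{<\kappa}\kappa$ (nonempty, closed under initial segments), a node $t\in p$ is $\mathcal F$-splitting if $\{\alpha<\kappa: t^\frown\alpha\in p\}\in\mathcal F$. For $s\in p$, $\deg_p(s)=\{i<\mathrm{dom}(s):\exists t\in p\,(t\restriction i=s\restriction i\wedge t(i)\ne s(i))\}$. The forcing $\mathbb P(\mathcal F)$ consists of subtrees $p\subseteq{}^{<\kappa}\kappa$ such that: $\sup\{\mathrm{dom}(s):s\in p\}=\kappa$; every $s\in p$ has an $\mathcal F$-splitting extension $t\supseteq s$ in $p$; (o) for every $s\in p$, the set $\{\alpha:s^\frown\alpha\in p\}$ is either a singleton or belongs to $\mathcal F$; (a) if $\delta<\kappa$ is limit, $s\in{}^\delta\kappa$ and $s\restriction\alpha\in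 p$ for all $\alpha<\delta$, then $s\in p$; (b) for every $s\in p$, $\deg_p(s)$ is closed in $\mathrm{dom}(s)$ (every limit $\gamma<\mathrm{dom}(s)$ with $\deg_p(s)\cap\gamma$ unbounded in $\gamma$ belongs to $\deg_p(s)$). Order: $p\le q$ iff $p\supseteq q$. For $\zeta<\kappa$: $p\le_\zeta q$ iff $p\le q$ and every $s\in p$ with $\mathrm{otp}(\deg_p(s))<\zeta$ belongs to $q$. *)

(* The cardinal kappa is represented by a type K together with
   a strict well-order lt on K whose order type is kappa: elements of K are the
   ordinals < kappa. *)
From Stdlib Require Import Classical FunctionalExtensionality PropExtensionality.
Set Implicit Arguments.

Section Defs.
Variable K : Type.
Variable lt : K -> K -> Prop.

Definition strict_well_order : Prop :=
  (forall a, ~ lt a a) /\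
  (forall a b c, lt a b -> lt b c -> lt a c) /\
  (forall a b, lt a b \/ a = b \/ lt b a) /\
  well_founded lt.

Definition is_infinite_regular_cardinal : Prop :=
  strict_well_order /\
  inhabited K /\
  (* no largest element: the order type is a limit ordinal, hence infinite *)
  (forall a, exists b, lt a b) /\
  (* cardinal: no injection of kappa into a smaller ordinal *)
  (forall a, ~ exists f : K -> K,
       (forall x y, f x = f y -> x = y) /\ (forall x, lt (f x) a)) /\
  (* regular: every map from an ordinal < kappa into kappa is bounded *)
  (forall a (g : K -> K), exists c, forall b, lt b a -> lt (g b) c).

(** Elements of ^{<kappa}kappa: partial maps K -> option K whose domain is an
    ordinal < kappa. *)
Definition sq := K -> option K.

Definition seq_len (s : sq) (a : K) : Prop := forall b, s b <> None <-> lt b a.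

Definition is_seq (s : sq) : Prop := exists a, seq_len s a.

(** kappa^{<kappa} = kappa  (the inequality >= is trivial) *)
Definition kappa_lt_kappa_eq_kappa : Prop :=
  exists e : sq -> K, forall s t, is_seq s -> is_seq t -> e s = e t -> s = t.

Definition lt_kappa_complete_filter (F : (K -> Prop) -> Prop) : Prop :=
  F (fun _ => True) /\
  ~ F (fun _ => False) /\
  (forall X Y : K -> Prop, F X -> (forall x, X x -> Y x) -> F Y) /\
  (forall (a : K) (X : K -> K -> Prop),
      (forall b, lt b a -> F (X b)) -> F (fun x => forall b, lt b a -> X b x)).

Definition ext (s : sq) (x : K) (t : sq) : Prop :=
  exists a, seq_len s a /\ t a = Some x /\ forall b, b <> a -> t b = s b.

Definition restr (s : sq) (i : K) (t : sq) : Prop :=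
  forall b, (lt b i -> t b = s b) /\ (~ lt b i -> t b = None).

Definition extends (t s : sq) : Prop := forall b, s b <> None -> t b = s b.

Definition succ_set (p : sq -> Prop) (s : sq) : K -> Prop :=
  fun x => exists t, ext s x t /\ p t.

Definition F_splitting (F : (K -> Prop) -> Prop) (p : sq -> Prop) (t : sq) :=
  p t /\ F (succ_set p t).

Definition is_limit (d : K) : Prop :=
  (exists b, lt b d) /\ forall b, lt b d -> exists c, lt b c /\ lt c d.

Definition deg (p : sq -> Prop) (s : sq) : K -> Prop := fun i =>
  exists a, seq_len s a /\ lt i a /\
  exists t x, p t /\ (forall b, lt b i -> t b = s b) /\
              t i = Some x /\ s i <> Some x.

Definition closed_in (X : K -> Prop) (a : K) : Prop :=
  forall g, lt g a -> is_limit g ->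
    (forall b, lt b g -> exists c, X c /\ lt b c /\ lt c g) -> X g.

(* otp(X) < z : X is order isomorphic to some ordinal z' < z *)
Definition otp_lt (X : K -> Prop) (z : K) : Prop :=
  exists z', lt z' z /\ exists f : K -> K,
    (forall x y, X x -> X y -> lt x y -> lt (f x) (f y)) /\
    (forall x, X x -> lt (f x) z') /\
    (forall b, lt b z' -> exists x, X x /\ f x = b).

Definition in_P (F : (K -> Prop) -> Prop) (p : sq -> Prop) : Prop :=
  (forall s, p s -> is_seq s) /\
  (exists s, p s) /\
  (forall s i t, p s -> restr s i t -> p t) /\
  (* sup of lengths is kappa *)
  (forall a, exists s b, p s /\ seq_len s b /\ (a = b \/ lt a b)) /\
  (forall s, p s -> exists t, extends t s /\ F_splitting F p t) /\
  (forall s, p s ->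
     (exists x, forall y, succ_set p s y <-> y = x) \/ F (succ_set p s)) /\
  (forall d s, is_limit d -> seq_len s d ->
     (forall a t, lt a d -> restr s a t -> p t) -> p s) /\
  (forall s a, p s -> seq_len s a -> closed_in (deg p s) a).

(* p <= q  iff  p ⊇ q *)
Definition le (p q : sq -> Prop) : Prop := forall s, q s -> p s.

Definition le_z (z : K) (p q : sq -> Prop) : Prop :=
  le p q /\ forall s, p s -> otp_lt (deg p s) z -> q s.

Definition dense_in_P (F : (K -> Prop) -> Prop) (D : (sq -> Prop) -> Prop) :=
  (forall d, D d -> in_P F d) /\
  (forall p, in_P F p -> exists d, D d /\ le p d).

Definition predense_above (F : (K -> Prop) -> Prop)
    (D : (sq -> Prop) -> Prop) (q : sq -> Prop) : Prop :=
  forall r, in_P F r -> le q r ->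
    exists d u, D d /\ in_P F u /\ le r u /\ le d u.

Definition card_le_kappa (D : (sq -> Prop) -> Prop) : Prop :=
  exists f : (sq -> Prop) -> K, forall d1 d2, D d1 -> D d2 -> f d1 = f d2 -> d1 = d2.

End Defs.

(* Call a node of p kept when it lies below some s' in p with otp(deg_p s') < z; every
   q >=_z p contains all kept nodes.  The condition q keeps these, the frontier (minimal
   non-kept nodes), and above every immediate successor w of the frontier the nodes of a member
   d_w of D inside the cone of p at w.  As the d_w are indexed by nodes, there are at most
   kappa of them.  A stronger condition r either has a node above the frontier, and then meets
   the d_w below it, or consists of kept nodes.  In the latter case p cannot split above every
   node of r: otherwise the degrees along a branch of r would form a set unbounded in kappa all
   of whose initial segments have order type < z, contradicting regularity.  So above some
   node k of r, p is a single branch, and d_k is contained in r. *)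

From Stdlib Require Import Classical ClassicalEpsilon FunctionalExtensionality PropExtensionality.

Set Implicit Arguments.
Unset Strict Implicit.

Section Forcing.
Variable K : Type.
Variable lt : K -> K -> Prop.
Hypothesis SWO : strict_well_order lt.
Hypothesis UNB : forall a, exists b, lt a b.

Implicit Types a b c d i j : K.
Implicit Types s t u y : sq K.

Lemma lt_irrefl a : ~ lt a a.
Proof. apply SWO. Qed.

Lemma lt_trans a b c : lt a b -> lt b c -> lt a c.
Proof. apply SWO. Qed.

Lemma lt_trichotomy a b : lt a b \/ a = b \/ lt b a.
Proof. apply SWO. Qed.

Lemma lt_asym a b : lt a b -> ~ lt b a.
Proof. intros H1 H2. apply (lt_irrefl (lt_trans H1 H2)). Qed.

Lemma exists_least (P : K -> Prop) :
  (exists x, P x) -> exists x, P x /\ forall x', P x' -> ~ lt x' x.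
Proof.
  intros [x Hx]. induction x as [x IH] using (well_founded_ind (proj2 (proj2 (proj2 SWO)))).
  destruct (classic (exists c, P c /\ lt c x)) as [[c [Hc Hcx]]|N].
  - exact (IH c Hcx Hc).
  - exists x. split; auto. intros c Hc Hcx. eauto.
Qed.

Definition leK a b := lt a b \/ a = b.

Lemma not_lt_leK a b : ~ lt a b -> leK b a.
Proof. intro H. destruct (lt_trichotomy a b) as [|[|]]; unfold leK; auto; tauto. Qed.

Lemma leK_lt_trans a b c : leK a b -> lt b c -> lt a c.
Proof. intros [H|H] H2; subst; eauto using lt_trans. Qed.

Lemma lt_leK_trans a b c : lt a b -> leK b c -> lt a c.
Proof. intros H [H2|H2]; subst; eauto using lt_trans. Qed.

Definition is_succ a b := lt a b /\ forall c, lt a c -> ~ lt c b.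

Lemma exists_succ a : exists b, is_succ a b.
Proof.
  destruct (exists_least (UNB a)) as [b [H1 H2]]. exists b. split; auto.
Qed.

Lemma is_succ_lt_leK a b i : is_succ a b -> lt i b -> leK i a.
Proof.
  intros [_ Hb] Hi. apply not_lt_leK. intro Hai. exact (Hb i Hai Hi).
Qed.

Lemma is_succ_leK a b c : is_succ a b -> lt a c -> leK b c.
Proof. intros [_ Hb] Hc. exact (not_lt_leK (Hb c Hc)). Qed.

Lemma leK_max_lt a b g : lt a g -> lt b g -> exists c, lt c g /\ leK a c /\ leK b c.
Proof.
  intros Ha Hb. destruct (classic (lt a b)) as [H|H].
  - exists b. split; auto. split; [left|right]; auto.
  - exists a. split; auto. split; [right; auto|exact (not_lt_leK H)].
Qed.

Lemma ordinal_cases a :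
  (forall b, ~ lt b a) \/ (exists b, is_succ b a) \/ is_limit lt a.
Proof.
  destruct (classic (exists b, lt b a)) as [[b0 Hb0]|N].
  - destruct (classic (exists b, is_succ b a)) as [H|N2]; auto.
    right; right. split; eauto. intros b Hb. apply NNPP. intro N3.
    apply N2. exists b. split; auto. intros c H1 H2. eauto.
  - left. intros b Hb. eauto.
Qed.

(** * Regularity *)

Hypothesis REG : forall a (g : K -> K), exists c, forall b, lt b a -> lt (g b) c.

Definition embeds_below (N : K -> Prop) b : Prop :=
  exists m : K -> K, (forall i j, N i -> N j -> lt i j -> lt (m i) (m j)) /\
                     (forall i, N i -> lt (m i) b).

(* The least bound [b x] of an order embedding of [N] below [x] is strictly increasing on [N];
   by regularity its inverse, defined on [z], is bounded, so [N] is bounded. *)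
Lemma unbounded_has_long_initial_segment (N : K -> Prop) z :
  (forall c, exists i, N i /\ lt c i) ->
  ~ (forall x, N x -> exists b, lt b z /\ embeds_below (fun i => N i /\ lt i x) b).
Proof.
  intros Unb Bnd.
  set (least_bound := fun x b => embeds_below (fun i => N i /\ lt i x) b /\
                                  forall b', embeds_below (fun i => N i /\ lt i x) b' -> ~ lt b' b).
  assert (Hex : forall x, N x -> exists b, least_bound x b /\ lt b z).
  { intros x Hx. destruct (Bnd x Hx) as [b0 [Hb0 Mb0]].
    destruct (exists_least (ex_intro _ b0 Mb0)) as [b [Mb Hmin]].
    exists b. split; [split; auto|]. exact (leK_lt_trans (not_lt_leK (Hmin b0 Mb0)) Hb0). }
  assert (Hmono : forall x1 x2 b1 b2,
            N x1 -> lt x1 x2 -> least_bound x1 b1 -> least_bound x2 b2 -> lt b1 b2).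
  { intros x1 x2 b1 b2 N1 H12 [_ Min1] [[m [Hm1 Hm2]] _].
    assert (Hm : embeds_below (fun i => N i /\ lt i x1) (m x1)).
    { exists m. split.
      - intros i j [Ni Hi] [Nj Hj] Hij. apply Hm1; auto; split; eauto using lt_trans.
      - intros i [Ni Hi]. apply Hm1; auto; split; eauto using lt_trans. }
    exact (leK_lt_trans (not_lt_leK (Min1 _ Hm)) (Hm2 x1 (conj N1 H12))). }
  set (g := fun b => match excluded_middle_informative (exists x, N x /\ least_bound x b) with
                     | left H => proj1_sig (constructive_indefinite_description _ H)
                     | right _ => b end).
  destruct (REG z g) as [c Hc]. destruct (Unb c) as [x [Nx Hcx]].
  destruct (Hex x Nx) as [b [Lb Hbz]].
  assert (Hg : g b = x).
  { unfold g. destruct (excluded_middle_informative (exists x, N x /\ least_bound x b)) as [E|E].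
    2:{ exfalso. eauto. }
    destruct (constructive_indefinite_description _ E) as [x' [Nx' Lx']]; simpl.
    destruct (lt_trichotomy x' x) as [H|[H|H]]; auto; exfalso; apply (lt_irrefl (a := b)); eauto. }
  apply (lt_asym Hcx). rewrite <- Hg. apply Hc; auto.
Qed.

(** * Sequences *)

Definition trunc (s : sq K) (i : K) : sq K :=
  fun b => if excluded_middle_informative (lt b i) then s b else None.

Lemma trunc_lt s i b : lt b i -> trunc s i b = s b.
Proof. intro H. unfold trunc. destruct (excluded_middle_informative (lt b i)); tauto. Qed.

Lemma trunc_nlt s i b : ~ lt b i -> trunc s i b = None.
Proof. intro H. unfold trunc. destruct (excluded_middle_informative (lt b i)); tauto. Qed.

Lemma restr_trunc s i : restr lt s i (trunc s i).
Proof. intro b. split; [apply trunc_lt | apply trunc_nlt]. Qed.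

Lemma restr_eq_trunc s i t : restr lt s i t -> t = trunc s i.
Proof.
  intro H. apply functional_extensionality. intro b. destruct (H b) as [H1 H2].
  destruct (classic (lt b i)).
  - rewrite trunc_lt; auto.
  - rewrite trunc_nlt; auto.
Qed.

Lemma seq_len_unique s a c : seq_len lt s a -> seq_len lt s c -> a = c.
Proof.
  intros Ha Hc. destruct (lt_trichotomy a c) as [H|[H|H]]; auto; exfalso.
  - apply (lt_irrefl (a := a)). apply Ha, Hc, H.
  - apply (lt_irrefl (a := c)). apply Hc, Ha, H.
Qed.

Lemma seq_len_trunc s a i : seq_len lt s a -> leK i a -> seq_len lt (trunc s i) i.
Proof.
  intros Ha Hi b. destruct (classic (lt b i)) as [H|H].
  - rewrite trunc_lt by auto. split; auto. intros _. apply Ha. exact (lt_leK_trans H Hi).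
  - rewrite trunc_nlt by auto. tauto.
Qed.

Lemma trunc_id s a i : seq_len lt s a -> leK a i -> trunc s i = s.
Proof.
  intros Ha Hi. apply functional_extensionality. intro b.
  destruct (classic (lt b i)) as [H|H]; [apply trunc_lt; auto|].
  rewrite trunc_nlt by auto. destruct (s b) eqn:E; auto.
  exfalso. apply H. apply (lt_leK_trans (b := a)); auto. apply Ha. congruence.
Qed.

Lemma trunc_trunc s i j : leK i j -> trunc (trunc s j) i = trunc s i.
Proof.
  intro H. apply functional_extensionality. intro b. destruct (classic (lt b i)).
  - rewrite !trunc_lt; auto. exact (lt_leK_trans H0 H).
  - rewrite !trunc_nlt; auto.
Qed.

Lemma is_seq_trunc s i : is_seq lt s -> is_seq lt (trunc s i).
Proof.
  intros [a Ha]. destruct (classic (lt i a)) as [H|H].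
  - exists i. apply (seq_len_trunc Ha). left; auto.
  - rewrite (trunc_id Ha (not_lt_leK H)). exists a; auto.
Qed.

Definition compatible (s t : sq K) : Prop :=
  forall b v w, s b = Some v -> t b = Some w -> v = w.

Lemma compatible_refl s : compatible s s.
Proof. intros b v w H1 H2. congruence. Qed.

Lemma compatible_sym s t : compatible s t -> compatible t s.
Proof. intros H b v w H1 H2. symmetry. eauto. Qed.

Lemma compatible_eq s t b : compatible s t -> s b <> None -> t b <> None -> s b = t b.
Proof.
  intros H Hs Ht. destruct (s b) eqn:E1; [|congruence]. destruct (t b) eqn:E2; [|congruence].
  f_equal. eauto.
Qed.

Lemma extends_refl s : extends s s.
Proof. intros b _; auto. Qed.

Lemma extends_trans s t u : extends s t -> extends t u -> extends s u.
Proof. intros H1 H2 b Hb. rewrite H1; rewrite H2; auto. Qed.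

Lemma extends_trunc s i : extends s (trunc s i).
Proof.
  intros b H. destruct (classic (lt b i)).
  - rewrite trunc_lt; auto.
  - rewrite trunc_nlt in H; tauto.
Qed.

Lemma extends_compatible t s : extends t s -> compatible s t.
Proof. intros H b v w H1 H2. rewrite H in H2 by congruence. congruence. Qed.

Lemma compatible_extends_r x y t : compatible x y -> extends y t -> compatible x t.
Proof. intros H1 H2 b v w E1 E2. rewrite <- H2 in E2 by congruence. eauto. Qed.

Lemma compatible_extends s t a c :
  seq_len lt s a -> seq_len lt t c -> compatible s t -> leK a c -> extends t s.
Proof.
  intros Ha Hc Hst Hac b Hb. symmetry. apply compatible_eq; auto.
  apply Hc. apply (lt_leK_trans (b := a)); auto. apply Ha; auto.
Qed.

Lemma extends_seq_len t s a c : extends t s -> seq_len lt s a -> seq_len lt t c -> leK a c.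
Proof.
  intros H Ha Hc. apply not_lt_leK. intro Hca.
  apply (lt_irrefl (a := c)). apply Hc. rewrite H; apply Ha; auto.
Qed.

Lemma extends_eq_trunc t s a : extends t s -> seq_len lt s a -> s = trunc t a.
Proof.
  intros H Ha. apply functional_extensionality. intro b. destruct (classic (lt b a)).
  - rewrite trunc_lt by auto. symmetry. apply H, Ha; auto.
  - rewrite trunc_nlt by auto. destruct (s b) eqn:E; auto. exfalso. apply H0, Ha. congruence.
Qed.

Lemma extends_same_len t s a : extends t s -> seq_len lt s a -> seq_len lt t a -> t = s.
Proof.
  intros H Ha Ht. rewrite (extends_eq_trunc H Ha). symmetry. apply (trunc_id Ht). right; auto.
Qed.

Lemma proper_extension_lt t u lu l :
  extends t u -> seq_len lt u lu -> seq_len lt t l -> u <> t -> lt lu l.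
Proof.
  intros E Hu Ht N. destruct (extends_seq_len E Hu Ht) as [H|H]; auto. subst.
  exfalso. apply N. symmetry. exact (extends_same_len E Hu Ht).
Qed.

Lemma compatible_cases s t a c :
  seq_len lt s a -> seq_len lt t c -> compatible s t ->
  (extends t s /\ leK a c) \/ (extends s t /\ leK c a).
Proof.
  intros Ha Hc Hst. destruct (classic (lt c a)) as [H|H].
  - right. split; [|left; auto].
    apply (compatible_extends Hc Ha); [apply compatible_sym; auto | left; auto].
  - left. split; [|apply not_lt_leK; auto]. apply (compatible_extends Ha Hc Hst). apply not_lt_leK; auto.
Qed.

Lemma first_difference s t a c :
  seq_len lt s a -> seq_len lt t c -> ~ compatible s t ->
  exists i v w, s i = Some v /\ t i = Some w /\ v <> w /\ forall b, lt b i -> s b = t b.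
Proof.
  intros Ha Hc N.
  assert (Ex : exists i, exists v w, s i = Some v /\ t i = Some w /\ v <> w).
  { apply NNPP. intro N2. apply N. intros i v w H1 H2. apply NNPP. intro. apply N2. eauto 6. }
  destruct (exists_least Ex) as [i [[v [w [H1 [H2 H3]]]] Hmin]].
  exists i, v, w. do 3 (split; auto). intros b Hb.
  destruct (s b) as [v'|] eqn:E1.
  2:{ exfalso. apply (Ha b); [apply (lt_trans Hb), Ha|]; congruence. }
  destruct (t b) as [w'|] eqn:E2.
  2:{ exfalso. apply (Hc b); [apply (lt_trans Hb), Hc|]; congruence. }
  destruct (classic (v' = w')) as [|Hne]; [congruence|]. exfalso. apply (Hmin b); eauto.
Qed.

Lemma ext_extends s v t : ext lt s v t -> extends t s.
Proof.
  intros [a [Ha [H1 H2]]] b Hb. apply H2. intro; subst.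
  apply (lt_irrefl (a := a)). apply Ha, Hb.
Qed.

Lemma ext_at s v t a : ext lt s v t -> seq_len lt s a -> t a = Some v.
Proof. intros [a' [Ha' [H _]]] Ha. rewrite (seq_len_unique Ha Ha'). auto. Qed.

Lemma ext_seq_len s v t a a' : ext lt s v t -> seq_len lt s a -> is_succ a a' -> seq_len lt t a'.
Proof.
  intros E Ha Hs b. destruct (classic (b = a)) as [->|Hb].
  - rewrite (ext_at E Ha). split; [intros _; apply Hs | discriminate].
  - destruct E as [a0 [Ha0 [_ H]]]. rewrite (seq_len_unique Ha0 Ha) in H.
    rewrite H by auto. rewrite (Ha b). split; intro Hb'.
    + exact (lt_trans Hb' (proj1 Hs)).
    + destruct (is_succ_lt_leK Hs Hb'); tauto.
Qed.

Lemma ext_neq s v t : ext lt s v t -> s <> t.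
Proof.
  intros [a [Ha [H _]]] ->. apply (lt_irrefl (a := a)). apply Ha. congruence.
Qed.

Lemma ext_proper_init s v t u :
  ext lt s v t -> is_seq lt s -> extends t u -> is_seq lt u -> u <> t -> extends s u.
Proof.
  intros E [a Ha] Etu [lu Hlu] N. destruct (exists_succ a) as [a' Ha'].
  pose proof (ext_seq_len E Ha Ha') as Ht.
  pose proof (is_succ_lt_leK Ha' (proper_extension_lt Etu Hlu Ht N)) as Hle.
  intros b Hb. assert (Hba : lt b a) by (apply (lt_leK_trans (b := lu)); auto; apply Hlu; auto).
  rewrite <- (ext_extends E) by (apply Ha; auto). apply Etu; auto.
Qed.

Lemma trunc_succ_ext y ly t a a' :
  seq_len lt y ly -> seq_len lt t a -> extends y t -> lt a ly -> is_succ a a' ->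
  exists v, ext lt t v (trunc y a').
Proof.
  intros Hy Ht E Hly Ha'. destruct (y a) as [v|] eqn:Ev.
  2:{ exfalso. apply (Hy a); auto. }
  exists v, a. split; auto. split; [rewrite trunc_lt; auto; apply Ha'|].
  intros b Hb. destruct (lt_trichotomy b a) as [H|[H|H]]; [|contradiction|].
  - rewrite trunc_lt by (exact (lt_trans H (proj1 Ha'))). apply E, Ht; auto.
  - rewrite trunc_nlt by (apply Ha'; auto). destruct (t b) eqn:E'; auto.
    exfalso. apply (lt_asym H). apply Ht. congruence.
Qed.

Lemma compatible_union (C : sq K -> Prop) d :
  is_limit lt d ->
  (forall y1 y2, C y1 -> C y2 -> compatible y1 y2) ->
  (forall c, lt c d -> exists y, C y /\ seq_len lt y c) ->
  exists u, seq_len lt u d /\ forall y c, C y -> seq_len lt y c -> lt c d -> trunc u c = y.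
Proof.
  intros Hd Hcomp Hcof.
  set (Cb := fun b y => C y /\ (exists c, lt c d /\ seq_len lt y c) /\ y b <> None).
  set (u := fun b => match excluded_middle_informative (exists y, Cb b y) with
                     | left H => proj1_sig (constructive_indefinite_description _ H) b
                     | right _ => None end).
  assert (Hu : forall b y, Cb b y -> u b = y b).
  { intros b y Hy. unfold u. destruct (excluded_middle_informative (exists y, Cb b y)) as [H|H].
    - destruct (constructive_indefinite_description _ H) as [y' Hy']; simpl.
      apply compatible_eq; [apply Hcomp; [apply Hy'|apply Hy] | apply Hy' | apply Hy].
    - exfalso; eauto. }
  assert (Hbelow : forall b, lt b d -> exists y, Cb b y).
  { intros b Hb. destruct (proj2 Hd b Hb) as [c [Hbc Hcd]]. destruct (Hcof c Hcd) as [y [Cy Hy]].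
    exists y. repeat split; eauto. apply Hy; auto. }
  assert (Hout : forall b, ~ lt b d -> u b = None).
  { intros b Hb. unfold u. destruct (excluded_middle_informative (exists y, Cb b y)) as [H|H]; auto.
    exfalso. destruct H as [y [_ [[c [Hc Hyc]] Hyb]]].
    apply Hb, (lt_trans (b := c)); auto. apply Hyc; auto. }
  exists u. split.
  - intro b. split.
    + intro H. apply NNPP. intro Hb. exact (H (Hout b Hb)).
    + intro Hb. destruct (Hbelow b Hb) as [y Hy]. rewrite (Hu b y Hy). apply Hy.
  - intros y c Cy Hy Hc. apply functional_extensionality. intro b. destruct (classic (lt b c)).
    + rewrite trunc_lt by auto. apply Hu. repeat split; eauto. apply Hy; auto.
    + rewrite trunc_nlt by auto. destruct (y b) eqn:E; auto. exfalso. apply H, Hy. congruence.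
Qed.

(** * Trees of the forcing *)

Variable F : (K -> Prop) -> Prop.
Hypothesis HF : lt_kappa_complete_filter lt F.

Lemma filter_nonempty X : F X -> exists x, X x.
Proof.
  intro H. apply NNPP. intro N. apply (proj1 (proj2 HF)).
  apply (proj1 (proj2 (proj2 HF)) X); auto. intros x Hx. eauto.
Qed.

Lemma filter_mono (X Y : K -> Prop) : F X -> (forall x, X x -> Y x) -> F Y.
Proof. apply HF. Qed.

Lemma succ_set_mono (T1 T2 : sq K -> Prop) s v :
  (forall y, T1 y -> T2 y) -> succ_set lt T1 s v -> succ_set lt T2 s v.
Proof. intros H [t [E Tt]]. exists t. auto. Qed.

Lemma succ_set_ext (T1 T2 : sq K -> Prop) s :
  (forall v, succ_set lt T1 s v <-> succ_set lt T2 s v) -> succ_set lt T1 s = succ_set lt T2 s.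
Proof. intro H. apply functional_extensionality. intro v. apply propositional_extensionality. auto. Qed.

Lemma deg_mono (T1 T2 : sq K -> Prop) s i :
  (forall y, T1 y -> T2 y) -> deg lt T1 s i -> deg lt T2 s i.
Proof.
  intros H [a [Ha [Hi [t [x [Tt Ht]]]]]].
  exists a. split; [exact Ha|]. split; [exact Hi|]. exists t, x. auto.
Qed.

Lemma deg_compatible (T : sq K -> Prop) s1 s2 a1 a2 i :
  seq_len lt s1 a1 -> seq_len lt s2 a2 -> compatible s1 s2 -> lt i a2 ->
  deg lt T s1 i -> deg lt T s2 i.
Proof.
  intros H1 H2 A Hi [a [Ha [Hia [t [v [Tt [Hb [Ht Hne]]]]]]]].
  rewrite (seq_len_unique Ha H1) in Hia.
  assert (Eq : forall b, leK b i -> s1 b = s2 b).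
  { intros b Hbi. apply compatible_eq; auto;
      [apply H1, (leK_lt_trans Hbi Hia) | apply H2, (leK_lt_trans Hbi Hi)]. }
  exists a2. split; [exact H2|]. split; [exact Hi|].
  exists t, v. split; [exact Tt|]. split; [|split; [exact Ht|]].
  - intros b Hbi. rewrite Hb by auto. apply Eq. left; auto.
  - rewrite <- Eq by (right; auto). auto.
Qed.

Section Tree.
Variable T : sq K -> Prop.
Hypothesis HT : in_P lt F T.

Lemma tree_seq s : T s -> is_seq lt s.
Proof. apply HT. Qed.

Lemma tree_trunc i s : T s -> T (trunc s i).
Proof. intro Hs. apply (proj1 (proj2 (proj2 HT)) s i); auto. apply restr_trunc. Qed.

Lemma tree_long a : exists s b, T s /\ seq_len lt s b /\ (a = b \/ lt a b).
Proof. apply HT. Qed.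

Lemma tree_split s : T s -> exists t, extends t s /\ F_splitting lt F T t.
Proof. apply HT. Qed.

Lemma tree_succ_cases s : T s ->
  (exists x, forall v, succ_set lt T s v <-> v = x) \/ F (succ_set lt T s).
Proof. apply HT. Qed.

Lemma tree_limit d s : is_limit lt d -> seq_len lt s d ->
  (forall c, lt c d -> T (trunc s c)) -> T s.
Proof.
  intros Hd Hs H. apply (proj1 (proj2 (proj2 (proj2 (proj2 (proj2 (proj2 HT))))))) with d; auto.
  intros a t Ha Ht. rewrite (restr_eq_trunc Ht). auto.
Qed.

Lemma tree_deg_closed s a : T s -> seq_len lt s a -> closed_in lt (deg lt T s) a.
Proof. apply HT. Qed.

Lemma tree_has_succ s : T s -> exists x t, ext lt s x t /\ T t.
Proof.
  intros Hs. destruct (tree_succ_cases Hs) as [[x Hx]|H].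
  - destruct (proj2 (Hx x) eq_refl) as [t [H1 H2]]. eauto.
  - destruct (filter_nonempty H) as [x [t [H1 H2]]]. eauto.
Qed.

Lemma tree_contains_root w : is_seq lt w -> (forall s, T s -> compatible w s) -> T w.
Proof.
  intros [lw Hlw] Hc. destruct (tree_long lw) as [y [b [Ty [Hb Hab]]]].
  assert (E : extends y w).
  { apply (compatible_extends Hlw Hb (Hc y Ty)). destruct Hab; [right|left]; auto. }
  rewrite (extends_eq_trunc E Hlw). apply tree_trunc; auto.
Qed.

Section Leftmost.
Variable x : sq K.
Variable lx : K.
Hypothesis Tx : T x.
Hypothesis Hlx : seq_len lt x lx.

(* Nodes of the leftmost branch of [T] through [x]: above [x], each value is the least one
   available in [T] given the values below it. *)
Definition leftmost y : Prop :=
  T y /\ compatible y x /\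
  forall i v, y i = Some v -> x i = None ->
  forall t w, T t -> (forall b, lt b i -> t b = y b) -> t i = Some w -> ~ lt w v.

Lemma leftmost_compatible y1 y2 : leftmost y1 -> leftmost y2 -> compatible y1 y2.
Proof.
  intros [T1 [A1 M1]] [T2 [A2 M2]]. apply NNPP. intro N.
  destruct (tree_seq T1) as [l1 Hl1]. destruct (tree_seq T2) as [l2 Hl2].
  destruct (first_difference Hl1 Hl2 N) as [i [v [w [H1 [H2 [Hvw Hbelow]]]]]].
  destruct (x i) as [xi|] eqn:Exi.
  - apply Hvw. transitivity xi; [|symmetry]; eauto.
  - pose proof (M1 i v H1 Exi y2 w T2 (fun b Hb => eq_sym (Hbelow b Hb)) H2).
    pose proof (M2 i w H2 Exi y1 v T1 Hbelow H1).
    destruct (lt_trichotomy v w) as [|[|]]; tauto.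
Qed.

Lemma leftmost_below_root a : leK a lx -> leftmost (trunc x a).
Proof.
  intro Ha. split; [apply tree_trunc; auto|]. split.
  - apply extends_compatible, extends_trunc.
  - intros i v H1 H2. exfalso. destruct (classic (lt i a)).
    + rewrite trunc_lt in H1; congruence.
    + rewrite trunc_nlt in H1; congruence.
Qed.

Lemma leftmost_succ y b a :
  leftmost y -> seq_len lt y b -> leK lx b -> is_succ b a ->
  exists y', leftmost y' /\ seq_len lt y' a.
Proof.
  intros [Ty [Ay My]] Hy Hlxb Ha.
  set (S := fun w => exists t, T t /\ (forall c, lt c b -> t c = y c) /\ t b = Some w).
  assert (HS : exists w, S w).
  { destruct (tree_has_succ Ty) as [w [t [E Tt]]]. exists w, t. split; auto.
    split; [|exact (ext_at E Hy)]. intros c Hc. apply (ext_extends E), Hy; auto. }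
  destruct (exists_least HS) as [v [[t1 [T1 [A1 B1]]] Mv]].
  destruct (tree_seq T1) as [l1 Hl1].
  assert (Hal1 : leK a l1) by (apply (is_succ_leK Ha), Hl1; congruence).
  assert (Hlt : forall c, lt c a -> lt c b \/ c = b) by (intros c Hc; exact (is_succ_lt_leK Ha Hc)).
  exists (trunc t1 a). split; [|exact (seq_len_trunc Hl1 Hal1)].
  split; [apply tree_trunc; auto|]. split.
  - intros c v1 w1 H1 H2.
    assert (Hc : lt c b) by (apply (lt_leK_trans (b := lx)); auto; apply Hlx; congruence).
    rewrite trunc_lt, A1 in H1 by (auto; exact (lt_trans Hc (proj1 Ha))). eapply Ay; eauto.
  - intros i v' H1 H2 t w Tt Hb Ht.
    assert (Hia : lt i a) by (apply NNPP; intro N; rewrite trunc_nlt in H1; congruence).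
    rewrite trunc_lt in H1 by auto.
    assert (Hbelow : forall c, lt c i -> t c = y c).
    { intros c Hc. rewrite Hb, trunc_lt by (auto; exact (lt_trans Hc Hia)).
      apply A1. destruct (Hlt i Hia) as [Hib| ->]; [exact (lt_trans Hc Hib)|auto]. }
    destruct (Hlt i Hia) as [Hib| ->].
    + rewrite A1 in H1 by auto. eapply My; eauto.
    + rewrite B1 in H1. injection H1 as ->. apply Mv. exists t. auto.
Qed.

Lemma leftmost_limit d :
  is_limit lt d -> (forall c, lt c d -> exists y, leftmost y /\ seq_len lt y c) ->
  exists u, leftmost u /\ seq_len lt u d.
Proof.
  intros Hd IH.
  destruct (compatible_union Hd leftmost_compatible IH) as [u [Hu Htr]].
  assert (Hat : forall i, lt i d -> exists y, leftmost y /\ forall b, lt b i \/ b = i -> u b = y b).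
  { intros i Hi. destruct (proj2 Hd i Hi) as [c [Hic Hcd]]. destruct (IH c Hcd) as [y [Ly Hy]].
    exists y. split; auto. intros b Hb. rewrite <- (Htr y c Ly Hy Hcd), trunc_lt; auto.
    exact (leK_lt_trans Hb Hic). }
  exists u. split; auto. split; [|split].
  - apply (tree_limit Hd Hu). intros c Hc. destruct (IH c Hc) as [y [Ly Hy]].
    rewrite (Htr y c Ly Hy Hc). apply Ly.
  - intros b v w H1 H2. assert (Hb : lt b d) by (apply Hu; congruence).
    destruct (Hat b Hb) as [y [Ly Ey]]. rewrite Ey in H1 by (right; auto). eapply Ly; eauto.
  - intros i v H1 H2 t w Tt Hb Ht. assert (Hi : lt i d) by (apply Hu; congruence).
    destruct (Hat i Hi) as [y [Ly Ey]]. rewrite Ey in H1 by (right; auto).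
    apply (proj2 (proj2 Ly) i v H1 H2 t w Tt); auto.
    intros b Hbi. rewrite Hb, Ey by (auto; left; auto). auto.
Qed.

Lemma leftmost_exists a : exists y, leftmost y /\ seq_len lt y a.
Proof.
  induction a as [a IH] using (well_founded_ind (proj2 (proj2 (proj2 SWO)))).
  destruct (classic (lt lx a)) as [Hlt|Hnlt].
  2:{ pose proof (not_lt_leK Hnlt) as Ha. exists (trunc x a).
      split; [apply leftmost_below_root; auto | exact (seq_len_trunc Hlx Ha)]. }
  destruct (ordinal_cases a) as [Z|[[b Hb]|Hlim]].
  - exfalso. exact (Z lx Hlt).
  - destruct (IH b (proj1 Hb)) as [y [Ly Hy]].
    apply (leftmost_succ Ly Hy); auto. apply not_lt_leK. intro Hbl. exact (proj2 Hb lx Hbl Hlt).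
  - exact (leftmost_limit Hlim IH).
Qed.

End Leftmost.

Lemma tree_extend_to_length x lx a :
  T x -> seq_len lt x lx -> leK lx a -> exists y, T y /\ extends y x /\ seq_len lt y a.
Proof.
  intros Tx Hlx Ha. destruct (leftmost_exists Tx Hlx a) as [y [[Ty [Ay _]] Hy]].
  exists y. split; auto. split; auto. apply (compatible_extends Hlx Hy); auto. apply compatible_sym; auto.
Qed.

Section Cone.
Variable x : sq K.
Hypothesis Tx : T x.

Definition cone : sq K -> Prop := fun y => T y /\ compatible x y.

Lemma cone_above y : T y -> extends y x -> cone y.
Proof. intros Ty E. split; auto. apply extends_compatible; auto. Qed.

Lemma cone_succ_set y v : extends y x -> succ_set lt T y v -> succ_set lt cone y v.
Proof.
  intros Ey [t [E Tt]]. exists t. split; auto. apply cone_above; auto.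
  exact (extends_trans (ext_extends E) Ey).
Qed.

Lemma cone_split s : cone s -> exists t, extends t s /\ F_splitting lt F cone t.
Proof.
  assert (Habove : forall y, T y -> extends y x -> exists t, extends t y /\ F_splitting lt F cone t).
  { intros y Ty Ey. destruct (tree_split Ty) as [t [Et [Tt Ft]]]. exists t. split; auto.
    assert (Etx : extends t x) by exact (extends_trans Et Ey).
    split; [apply cone_above; auto|]. apply (filter_mono Ft). intro v. apply cone_succ_set; auto. }
  intros [Ts As]. destruct (tree_seq Tx) as [lx Hlx]. destruct (tree_seq Ts) as [ls Hls].
  destruct (compatible_cases Hlx Hls As) as [[E _]|[E _]]; auto.
  destruct (Habove x Tx (extends_refl (s := x))) as [t [H1 H2]]. exists t. split; auto.
  exact (extends_trans H1 E).
Qed.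

Lemma cone_succ_below s ls lx v0 :
  seq_len lt s ls -> seq_len lt x lx -> extends x s -> lt ls lx -> x ls = Some v0 ->
  forall v, succ_set lt cone s v <-> v = v0.
Proof.
  intros Hls Hlx E Hlt Ev0 v. split.
  - intros [t [Et [_ At]]]. symmetry. exact (At ls v0 v Ev0 (ext_at Et Hls)).
  - intros ->. destruct (exists_succ ls) as [l1 Hl1].
    destruct (trunc_succ_ext Hlx Hls E Hlt Hl1) as [v Ev].
    exists (trunc x l1). split.
    + replace v0 with v; auto. pose proof (ext_at Ev Hls) as H.
      rewrite trunc_lt in H by apply Hl1. congruence.
    + split; [apply tree_trunc; auto|]. apply compatible_sym, extends_compatible, extends_trunc.
Qed.

Lemma cone_succ_cases s : cone s ->
  (exists v0, forall v, succ_set lt cone s v <-> v = v0) \/ F (succ_set lt cone s).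
Proof.
  intros [Ts As]. destruct (tree_seq Tx) as [lx Hlx]. destruct (tree_seq Ts) as [ls Hls].
  destruct (classic (extends s x)) as [E|NE].
  - destruct (tree_succ_cases Ts) as [[v0 Hv0]|H].
    + left. exists v0. intro v. rewrite <- Hv0. split; [|apply cone_succ_set; auto].
      apply succ_set_mono. intros y [Ty _]; auto.
    + right. apply (filter_mono H). intro v. apply cone_succ_set; auto.
  - destruct (compatible_cases Hlx Hls As) as [[E _]|[E Hle]]; [contradiction|].
    assert (Hlt : lt ls lx).
    { destruct Hle as [H| ->]; auto.
      exfalso. apply NE. rewrite (extends_same_len E Hls Hlx). apply extends_refl. }
    destruct (x ls) as [v0|] eqn:Ev0; [|exfalso; apply (Hlx ls); auto].
    left. exists v0. exact (cone_succ_below Hls Hlx E Hlt Ev0).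
Qed.

Lemma cone_limit d s : is_limit lt d -> seq_len lt s d ->
  (forall c, lt c d -> cone (trunc s c)) -> cone s.
Proof.
  intros Hd Hs Hr. split.
  - apply (tree_limit Hd Hs). intros c Hc. apply Hr; auto.
  - intros b v w H1 H2. assert (Hb : lt b d) by (apply Hs; congruence).
    destruct (proj2 Hd b Hb) as [c [Hbc Hcd]].
    apply (proj2 (Hr c Hcd) b); auto. rewrite trunc_lt; auto.
Qed.

Lemma deg_cone_not_below_root s lx c :
  compatible x s -> seq_len lt x lx -> deg lt cone s c -> ~ lt c lx.
Proof.
  intros As Hlx [a [Ha [Hca [t [v [[_ At] [_ [Ht Hne]]]]]]]] Hc.
  destruct (x c) as [xc|] eqn:Exc; [|apply (Hlx c); auto].
  destruct (s c) as [sc|] eqn:Esc; [|apply (Ha c); auto].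
  apply Hne. f_equal. transitivity xc; [symmetry; exact (As c xc sc Exc Esc)|exact (At c xc v Exc Ht)].
Qed.

Lemma cone_deg_closed s a : cone s -> seq_len lt s a -> closed_in lt (deg lt cone s) a.
Proof.
  intros [Ts As] Hsa g Hg Hlim Hcof. destruct (tree_seq Tx) as [lx Hlx].
  assert (Hdeg : deg lt T s g).
  { apply (tree_deg_closed Ts Hsa); auto. intros b Hb. destruct (Hcof b Hb) as [c [Hc Hbc]].
    exists c. split; auto. apply (deg_mono (T1 := cone)); auto. intros y [Ty _]; auto. }
  assert (Hlxg : lt lx g \/ lx = g).
  { destruct (proj1 Hlim) as [b0 Hb0]. destruct (Hcof b0 Hb0) as [c [Hc [_ Hcg]]].
    pose proof (not_lt_leK (deg_cone_not_below_root As Hlx Hc)) as H. left. exact (leK_lt_trans H Hcg). }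
  destruct Hdeg as [a2 [Ha2 [Hga2 [t [v [Tt [Hb [Ht Hne]]]]]]]].
  exists a2. split; auto. split; auto. exists t, v. split; [split; auto|]; auto.
  intros b v1 w1 E1 E2. assert (Hblx : lt b lx) by (apply Hlx; congruence).
  rewrite Hb in E2 by exact (lt_leK_trans Hblx Hlxg). eapply As; eauto.
Qed.

Lemma cone_in_P : in_P lt F cone.
Proof.
  destruct (tree_seq Tx) as [lx Hlx].
  split; [|split; [|split; [|split; [|split; [|split; [|split]]]]]].
  - intros s [Ts _]. exact (tree_seq Ts).
  - exists x. split; auto. apply compatible_refl.
  - intros s i t [Ts As] Hr. rewrite (restr_eq_trunc Hr). split; [apply tree_trunc; auto|].
    exact (compatible_extends_r As (extends_trunc (s := s) (i := i))).
  - intro a. destruct (classic (lt a lx)) as [H|H].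
    + exists x, lx. split; [split; auto; apply compatible_refl|auto].
    + destruct (tree_extend_to_length Tx Hlx (not_lt_leK H)) as [y [Ty [Ey Hy]]].
      exists y, a. split; [apply cone_above|]; auto.
  - exact cone_split.
  - exact cone_succ_cases.
  - intros d s Hd Hs Hr. apply (cone_limit Hd Hs). intros c Hc. exact (Hr c _ Hc (restr_trunc s c)).
  - exact cone_deg_closed.
Qed.

End Cone.
End Tree.

Lemma incompatible_extension_deg (T : sq K -> Prop) t y k a c :
  T t -> is_seq lt t -> seq_len lt y a -> seq_len lt k c -> extends t k -> extends y k ->
  ~ compatible t y -> exists m, deg lt T y m /\ ~ lt m c.
Proof.
  intros Tt [lt0 Hlt0] Hy Hk Etk Eyk N.
  destruct (first_difference Hlt0 Hy N) as [m [v [w [H1 [H2 [Hvw Hbelow]]]]]].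
  exists m. split.
  - exists a. split; auto. split; [apply Hy; congruence|]. exists t, v. split; auto.
    split; [intros b Hb; apply Hbelow; auto|]. split; auto. congruence.
  - intro Hmc. apply Hvw. assert (Hkm : k m <> None) by (apply Hk; auto).
    rewrite Etk in H1 by auto. rewrite Eyk in H2 by auto. congruence.
Qed.

(** * The mastering condition *)

Section Mastering.
Variable p : sq K -> Prop.
Hypothesis Hp : in_P lt F p.
Variable z : K.

(* The nodes that every [q] with [p <=_z q] must contain. *)
Definition kept s : Prop :=
  p s /\ exists s', p s' /\ extends s' s /\ otp_lt lt (deg lt p s') z.

Section Branch.
Variable r : sq K -> Prop.
Hypothesis Hr : in_P lt F r.
Variable x0 : sq K.
Hypothesis Rx0 : r x0.
Variable l0 : K.
Hypothesis Hl0 : seq_len lt x0 l0.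

Definition branch_deg i : Prop := exists y, leftmost r x0 y /\ deg lt p y i.

Lemma branch_deg_unbounded :
  (forall k, r k -> exists t1 t2, p t1 /\ p t2 /\ extends t1 k /\ extends t2 k /\ ~ compatible t1 t2) ->
  forall c, exists i, branch_deg i /\ lt c i.
Proof.
  intros r_splits c.
  destruct (UNB c) as [c1 Hc1]. destruct (leftmost_exists Hr Rx0 Hl0 c1) as [k [Bk Hk]].
  destruct (r_splits k (proj1 Bk)) as [t1 [t2 [P1 [P2 [E1 [E2 N]]]]]].
  destruct (tree_seq Hp P1) as [l1 Hl1]. destruct (tree_seq Hp P2) as [l2 Hl2].
  destruct (first_difference Hl1 Hl2 N) as [j [v1 [v2 [J1 [J2 [J3 _]]]]]].
  assert (Hcj : ~ lt j c1).
  { intro Hjc. apply J3. assert (Hkj : k j <> None) by (apply Hk; auto).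
    rewrite E1 in J1 by auto. rewrite E2 in J2 by auto. congruence. }
  destruct (UNB j) as [j1 Hj1]. destruct (leftmost_exists Hr Rx0 Hl0 j1) as [y [By Hy]].
  assert (Eyk : extends y k).
  { apply (compatible_extends Hk Hy (leftmost_compatible Hr Bk By)).
    left. exact (leK_lt_trans (not_lt_leK Hcj) Hj1). }
  assert (Hinc : ~ compatible t1 y \/ ~ compatible t2 y).
  { apply NNPP. intro H. apply J3. destruct (y j) as [w|] eqn:Ey; [|exfalso; apply (Hy j); auto].
    assert (C1 : compatible t1 y) by (apply NNPP; tauto).
    assert (C2 : compatible t2 y) by (apply NNPP; tauto).
    transitivity w; [exact (C1 j v1 w J1 Ey)|symmetry; exact (C2 j v2 w J2 Ey)]. }
  destruct Hinc as [Hinc|Hinc];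
    [destruct (incompatible_extension_deg P1 (ex_intro _ l1 Hl1) Hy Hk E1 Eyk Hinc) as [m [Hm Hmc]]
    |destruct (incompatible_extension_deg P2 (ex_intro _ l2 Hl2) Hy Hk E2 Eyk Hinc) as [m [Hm Hmc]]];
    exists m; (split; [exists y; auto|exact (lt_leK_trans Hc1 (not_lt_leK Hmc))]).
Qed.

(* A long enough node of the branch is kept, witnessed by some [s'] with [otp (deg p s') < z],
   and [deg p s'] contains every initial segment of [branch_deg]. *)
Lemma branch_deg_initial_embeds :
  (forall y, r y -> kept y) ->
  forall x, exists b, lt b z /\ embeds_below (fun i => branch_deg i /\ lt i x) b.
Proof.
  intros r_kept x. destruct (UNB x) as [x1 Hx1]. destruct (leftmost_exists Hr Rx0 Hl0 x1) as [y [By Hy]].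
  destruct (r_kept y (proj1 By)) as [_ [s' [Ps' [Es' [z' [Hz' [f [Hf1 [Hf2 _]]]]]]]]].
  destruct (tree_seq Hp Ps') as [ls' Hls'].
  assert (Hsub : forall i, branch_deg i -> lt i x -> deg lt p s' i).
  { intros i [yi [Byi Hdi]] Hix. pose proof Hdi as [ai [Hai _]].
    assert (Hix1 : lt i x1) by exact (lt_trans Hix Hx1).
    apply (deg_compatible Hy Hls' (extends_compatible Es')).
    - exact (lt_leK_trans Hix1 (extends_seq_len Es' Hy Hls')).
    - exact (deg_compatible Hai Hy (leftmost_compatible Hr Byi By) Hix1 Hdi). }
  exists z'. split; auto. exists f. split.
  - intros i j [Di Hi] [Dj Hj] Hij. apply Hf1; auto.
  - intros i [Di Hi]. apply Hf2; auto.
Qed.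

End Branch.

Lemma kept_tree_has_thin_node r : in_P lt F r -> (forall y, r y -> kept y) ->
  exists k, r k /\ forall t1 t2, p t1 -> p t2 -> extends t1 k -> extends t2 k -> compatible t1 t2.
Proof.
  intros Hr r_kept. apply NNPP. intro N.
  destruct (proj1 (proj2 Hr)) as [x0 Rx0]. destruct (tree_seq Hr Rx0) as [l0 Hl0].
  apply (unbounded_has_long_initial_segment (N := branch_deg r x0) (z := z)).
  - apply (branch_deg_unbounded Hr Rx0 Hl0). intros k Rk. apply NNPP. intro N2. apply N.
    exists k. split; auto. intros t1 t2 P1 P2 E1 E2. apply NNPP. intro. apply N2. exists t1, t2. tauto.
  - intros x _. exact (branch_deg_initial_embeds Hr Rx0 Hl0 r_kept x).
Qed.

Definition frontier t : Prop :=
  p t /\ ~ kept t /\ forall u, is_seq lt u -> extends t u -> u <> t -> kept u.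

Definition frontier_succ w : Prop := p w /\ exists t v, frontier t /\ ext lt t v w.

Definition above_frontier y : Prop := p y /\ ~ kept y /\ ~ frontier y.

Lemma kept_init y s : kept y -> extends y s -> is_seq lt s -> kept s.
Proof.
  intros [Py [s' [Ps' [E O]]]] Ey [ls Hls]. split.
  - rewrite (extends_eq_trunc Ey Hls). apply tree_trunc; auto.
  - exists s'. split; auto. split; auto. exact (extends_trans E Ey).
Qed.

Lemma frontier_init t u : frontier t -> extends t u -> is_seq lt u -> kept u \/ u = t.
Proof. intros [_ [_ H]] E S. destruct (classic (u = t)); auto. Qed.

Lemma kept_or_frontier y :
  p y -> (forall u, is_seq lt u -> extends y u -> u <> y -> kept u) -> kept y \/ frontier y.
Proof. intros Py H. destruct (classic (kept y)); auto. right. split; auto. Qed.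

Lemma frontier_compatible_eq t1 t2 : frontier t1 -> frontier t2 -> compatible t1 t2 -> t1 = t2.
Proof.
  intros F1 F2 A. destruct (tree_seq Hp (proj1 F1)) as [l1 H1]. destruct (tree_seq Hp (proj1 F2)) as [l2 H2].
  destruct (compatible_cases H1 H2 A) as [[E _]|[E _]].
  - destruct (frontier_init F2 E (ex_intro _ l1 H1)) as [Hk|]; [exfalso; exact (proj1 (proj2 F1) Hk)|auto].
  - destruct (frontier_init F1 E (ex_intro _ l2 H2)) as [Hk|]; [exfalso; exact (proj1 (proj2 F2) Hk)|auto].
Qed.

Lemma frontier_below y : p y -> ~ kept y -> exists t, frontier t /\ extends y t.
Proof.
  intros Py NK. destruct (tree_seq Hp Py) as [ly Hly].
  destruct (exists_least (P := fun l => ~ kept (trunc y l) /\ leK l ly)) as [l0 [[H1 H2] Hmin]].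
  { exists ly. rewrite (trunc_id Hly (or_intror eq_refl)). split; auto. right; auto. }
  pose proof (seq_len_trunc Hly H2) as Hl0.
  exists (trunc y l0). split; [|apply extends_trunc].
  split; [apply tree_trunc; auto|]. split; auto.
  intros u [lu Hlu] Eu Nu. pose proof (proper_extension_lt Eu Hlu Hl0 Nu) as Hlt.
  rewrite (extends_eq_trunc Eu Hlu), trunc_trunc by (left; auto).
  apply NNPP. intro N. apply (Hmin lu); auto. split; auto. left. exact (lt_leK_trans Hlt H2).
Qed.

Lemma kept_ext t v w : kept t -> p w -> ext lt t v w -> kept w \/ frontier w.
Proof.
  intros Kt Pw E. apply kept_or_frontier; auto. intros u Su Eu Nu.
  apply (kept_init Kt); auto. exact (ext_proper_init E (tree_seq Hp (proj1 Kt)) Eu Su Nu).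
Qed.

Lemma frontier_succ_above_frontier w : frontier_succ w -> above_frontier w.
Proof.
  intros [Pw [t [v [Ft E]]]]. pose proof (ext_extends E) as Ewt.
  pose proof (tree_seq Hp (proj1 Ft)) as St. split; auto. split.
  - intro Kw. exact (proj1 (proj2 Ft) (kept_init Kw Ewt St)).
  - intro Fw. exact (proj1 (proj2 Ft) (proj2 (proj2 Fw) t St Ewt (ext_neq E))).
Qed.

Lemma above_frontier_ext y y' :
  above_frontier y -> is_seq lt y -> p y' -> extends y' y -> above_frontier y'.
Proof.
  intros [_ [NK NF]] Sy Py' E. split; auto. split.
  - intro Kv. exact (NK (kept_init Kv E Sy)).
  - intro Fv. destruct (frontier_init Fv E Sy) as [H| ->]; auto.
Qed.

Lemma frontier_proper_ext_above y y' :
  frontier y -> p y' -> extends y' y -> y' <> y -> above_frontier y'.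
Proof.
  intros Fy Py' E N. pose proof (tree_seq Hp (proj1 Fy)) as Sy. split; auto. split.
  - intro Ky'. exact (proj1 (proj2 Fy) (kept_init Ky' E Sy)).
  - intro Fy'. destruct (frontier_init Fy' E Sy) as [Ky|]; auto. exact (proj1 (proj2 Fy) Ky).
Qed.

Lemma above_frontier_has_frontier_succ y :
  above_frontier y -> exists w, frontier_succ w /\ extends y w.
Proof.
  intros [Py [NK NF]]. destruct (frontier_below Py NK) as [t [Ft Eyt]].
  destruct (tree_seq Hp Py) as [ly Hly]. destruct (tree_seq Hp (proj1 Ft)) as [l0 Hl0].
  assert (Hlt : lt l0 ly) by (apply (proper_extension_lt Eyt Hl0 Hly); intros ->; auto).
  destruct (exists_succ l0) as [l1 Hl1].
  destruct (trunc_succ_ext Hly Hl0 Eyt Hlt Hl1) as [v E].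
  exists (trunc y l1). split; [|apply extends_trunc].
  split; [apply tree_trunc; auto|]. exists t, v. auto.
Qed.

Lemma frontier_succ_compatible_eq w1 w2 :
  frontier_succ w1 -> frontier_succ w2 -> compatible w1 w2 -> w1 = w2.
Proof.
  intros [_ [t1 [v1 [F1 E1]]]] [_ [t2 [v2 [F2 E2]]]] A.
  assert (t1 = t2) as <-.
  { apply frontier_compatible_eq; auto. apply compatible_sym.
    apply (compatible_extends_r (y := w1)); [|exact (ext_extends E1)].
    apply compatible_sym, (compatible_extends_r A), (ext_extends E2). }
  destruct (tree_seq Hp (proj1 F1)) as [l0 Hl0]. destruct (exists_succ l0) as [l1 Hl1].
  pose proof (ext_seq_len E1 Hl0 Hl1) as L1. pose proof (ext_seq_len E2 Hl0 Hl1) as L2.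
  symmetry. exact (extends_same_len (compatible_extends L1 L2 A (or_intror eq_refl)) L1 L2).
Qed.

Lemma frontier_succ_not_limit w lw : frontier_succ w -> seq_len lt w lw -> ~ is_limit lt lw.
Proof.
  intros [_ [t [v [Ft E]]]] Hlw [_ Hlim]. destruct (tree_seq Hp (proj1 Ft)) as [l0 Hl0].
  destruct (exists_succ l0) as [l1 Hl1]. rewrite (seq_len_unique Hlw (ext_seq_len E Hl0 Hl1)) in Hlim.
  destruct (Hlim l0 (proj1 Hl1)) as [c [H1 H2]]. exact (proj2 Hl1 c H1 H2).
Qed.

Variable D : (sq K -> Prop) -> Prop.
Hypothesis HD : dense_in_P lt F D.

(* Meaningful only when [p w], which makes [cone p w] a condition. *)
Definition dense_below w : sq K -> Prop :=
  epsilon (inhabits (fun _ => False)) (fun q => D q /\ le (cone p w) q).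

Lemma dense_below_spec w : p w -> D (dense_below w) /\ le (cone p w) (dense_below w).
Proof. intro Pw. unfold dense_below. apply epsilon_spec, (proj2 HD), cone_in_P; auto. Qed.

Lemma dense_below_in_P w : p w -> in_P lt F (dense_below w).
Proof. intro Pw. apply (proj1 HD), dense_below_spec; auto. Qed.

Lemma dense_below_cone w s : p w -> dense_below w s -> cone p w s.
Proof. intros Pw. apply dense_below_spec; auto. Qed.

Lemma dense_below_root w : p w -> dense_below w w.
Proof.
  intro Pw. apply (tree_contains_root (dense_below_in_P Pw) (tree_seq Hp Pw)).
  intros s Hs. apply (dense_below_cone Pw Hs).
Qed.

Definition master s : Prop :=
  kept s \/ frontier s \/ exists w, frontier_succ w /\ dense_below w s.

Lemma node_cases y : p y -> (kept y \/ frontier y) \/ above_frontier y.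
Proof. intro Py. destruct (classic (kept y \/ frontier y)) as [H|N]; auto. right. split; auto; tauto. Qed.

Lemma master_sub_p s : master s -> p s.
Proof.
  intros [[H _]|[[H _]|[w [[Pw _] Hs]]]]; auto. exact (proj1 (dense_below_cone Pw Hs)).
Qed.

Lemma dense_below_sub_master w y : frontier_succ w -> dense_below w y -> master y.
Proof. intros Ww Hy. right; right. eauto. Qed.

Lemma master_sub_dense_below w y : frontier_succ w -> master y -> extends y w -> dense_below w y.
Proof.
  intros Ww My Eyw.
  destruct (above_frontier_ext (frontier_succ_above_frontier Ww) (tree_seq Hp (proj1 Ww))
             (master_sub_p My) Eyw) as [_ [NK NF]].
  destruct My as [|[|[w' [Ww' Hy]]]]; try contradiction.
  replace w with w'; auto. apply frontier_succ_compatible_eq; auto.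
  exact (compatible_extends_r (proj2 (dense_below_cone (proj1 Ww') Hy)) Eyw).
Qed.

Lemma master_above_frontier_in_dense_below y :
  master y -> above_frontier y -> exists w, frontier_succ w /\ dense_below w y /\ extends y w.
Proof.
  intros My Hy. destruct (above_frontier_has_frontier_succ Hy) as [w [Ww Eyw]].
  exists w. split; auto. split; auto. exact (master_sub_dense_below Ww My Eyw).
Qed.

Lemma master_succ_set s v : kept s \/ frontier s -> succ_set lt p s v -> succ_set lt master s v.
Proof.
  intros Hs [w [E Pw]]. exists w. split; auto. destruct Hs as [Ks|Fs].
  - destruct (kept_ext Ks Pw E) as [H|H]; [left|right; left]; auto.
  - assert (Ww : frontier_succ w) by (split; auto; eauto).
    exact (dense_below_sub_master Ww (dense_below_root Pw)).
Qed.

Lemma master_succ_set_above_frontier s w v :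
  frontier_succ w -> extends s w -> succ_set lt master s v -> succ_set lt (dense_below w) s v.
Proof.
  intros Ww Esw [t [E Mt]]. exists t. split; auto.
  exact (master_sub_dense_below Ww Mt (extends_trans (ext_extends E) Esw)).
Qed.

Lemma master_long a : exists s b, master s /\ seq_len lt s b /\ (a = b \/ lt a b).
Proof.
  destruct (tree_long Hp a) as [y [b [Py [Hb Hab]]]].
  destruct (node_cases Py) as [Hy|Hy].
  - exists y, b. split; auto. destruct Hy; [left|right; left]; auto.
  - destruct (above_frontier_has_frontier_succ Hy) as [w [Ww _]].
    destruct (tree_long (dense_below_in_P (proj1 Ww)) a) as [s [b' [Hs Hb']]].
    exists s, b'. split; auto. exact (dense_below_sub_master Ww Hs).
Qed.

Lemma master_trunc s i : master s -> master (trunc s i).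
Proof.
  intro Ms. pose proof (is_seq_trunc i (tree_seq Hp (master_sub_p Ms))) as St.
  destruct Ms as [Ks|[Fs|[w [Ww Hs]]]].
  - left. exact (kept_init Ks (extends_trunc (s := s) (i := i)) St).
  - destruct (frontier_init Fs (extends_trunc (s := s) (i := i)) St) as [H| ->]; [left|right; left]; auto.
  - apply (dense_below_sub_master Ww). apply tree_trunc; auto. exact (dense_below_in_P (proj1 Ww)).
Qed.

Lemma dense_below_split w s :
  frontier_succ w -> dense_below w s -> exists t, extends t s /\ F_splitting lt F master t.
Proof.
  intros Ww Hs. destruct (tree_split (dense_below_in_P (proj1 Ww)) Hs) as [t [E [Ht Ft]]].
  exists t. split; auto. split; [exact (dense_below_sub_master Ww Ht)|].
  apply (filter_mono Ft). intro v. apply succ_set_mono. intros y Hy. exact (dense_below_sub_master Ww Hy).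
Qed.

Lemma master_split s : master s -> exists t, extends t s /\ F_splitting lt F master t.
Proof.
  intro Ms. destruct (node_cases (master_sub_p Ms)) as [BF|Hh].
  2:{ destruct (master_above_frontier_in_dense_below Ms Hh) as [w [Ww [Hs _]]].
      exact (dense_below_split Ww Hs). }
  destruct (tree_split Hp (master_sub_p Ms)) as [t [Ets [Pt Ft]]].
  destruct (node_cases Pt) as [BFt|Ht].
  - exists t. split; auto. split; [destruct BFt; [left|right; left]; auto|].
    apply (filter_mono Ft). intro v. apply master_succ_set; auto.
  - destruct (above_frontier_has_frontier_succ Ht) as [w [Ww Etw]].
    destruct (tree_seq Hp (proj1 Ww)) as [lw Hlw]. destruct (tree_seq Hp (master_sub_p Ms)) as [ls Hls].
    assert (Ews : extends w s).
    { assert (A : compatible w s) by exact (compatible_extends_r (extends_compatible Etw) Ets).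
      destruct (compatible_cases Hlw Hls A) as [[E _]|[E _]]; auto. exfalso.
      destruct (above_frontier_ext (frontier_succ_above_frontier Ww) (ex_intro _ lw Hlw)
                 (master_sub_p Ms) E) as [_ [NK NF]].
      destruct BF; auto. }
    destruct (dense_below_split Ww (dense_below_root (proj1 Ww))) as [t' [Et' Ft']].
    exists t'. split; auto. exact (extends_trans Et' Ews).
Qed.

Lemma master_succ_cases s : master s ->
  (exists x, forall v, succ_set lt master s v <-> v = x) \/ F (succ_set lt master s).
Proof.
  intro Ms. destruct (node_cases (master_sub_p Ms)) as [BF|Hh].
  - replace (succ_set lt master s) with (succ_set lt p s).
    + exact (tree_succ_cases Hp (master_sub_p Ms)).
    + apply succ_set_ext. intro v. split; [apply master_succ_set; auto|apply succ_set_mono, master_sub_p].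
  - destruct (master_above_frontier_in_dense_below Ms Hh) as [w [Ww [Hs Esw]]].
    replace (succ_set lt master s) with (succ_set lt (dense_below w) s).
    + exact (tree_succ_cases (dense_below_in_P (proj1 Ww)) Hs).
    + apply succ_set_ext. intro v. split; [|apply master_succ_set_above_frontier; auto].
      apply succ_set_mono. intros y Hy. exact (dense_below_sub_master Ww Hy).
Qed.

Lemma master_limit d s : is_limit lt d -> seq_len lt s d ->
  (forall c, lt c d -> master (trunc s c)) -> master s.
Proof.
  intros Hd Hs Hr. assert (Ps : p s) by (apply (tree_limit Hp Hd Hs); intros c Hc; apply master_sub_p; auto).
  destruct (node_cases Ps) as [[|]|Hh]; [left|right; left|]; auto.
  destruct (above_frontier_has_frontier_succ Hh) as [w [Ww Esw]].
  destruct (tree_seq Hp (proj1 Ww)) as [lw Hlw]. pose proof (extends_eq_trunc Esw Hlw) as Hw.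
  right; right. exists w. split; auto.
  apply (tree_limit (dense_below_in_P (proj1 Ww)) Hd Hs). intros c Hc.
  destruct (classic (lt c lw)) as [Hclw|Hclw].
  - replace (trunc s c) with (trunc w c) by (rewrite Hw, trunc_trunc; auto; left; auto).
    apply tree_trunc; [exact (dense_below_in_P (proj1 Ww))|exact (dense_below_root (proj1 Ww))].
  - apply master_sub_dense_below; auto. rewrite Hw, <- (trunc_trunc s (not_lt_leK Hclw)).
    apply extends_trunc.
Qed.

Lemma deg_master_of_deg_p s a i : seq_len lt s a -> deg lt p s i ->
  kept (trunc s i) \/ frontier (trunc s i) -> deg lt master s i.
Proof.
  intros Hsa [a' [Ha' [Hia [t [v [Pt [Hb [Ht Hne]]]]]]]] BF.
  rewrite (seq_len_unique Ha' Hsa) in Hia. pose proof (seq_len_trunc Hsa (or_introl Hia)) as Hsi.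
  destruct (tree_seq Hp Pt) as [l Hl].
  assert (Ets : extends t (trunc s i)).
  { intros b Hb'. assert (lt b i) by (apply NNPP; intro N; rewrite trunc_nlt in Hb'; auto).
    rewrite trunc_lt, Hb; auto. }
  destruct (exists_succ i) as [i1 Hi1].
  destruct (trunc_succ_ext Hl Hsi Ets ltac:(apply Hl; congruence) Hi1) as [v' E].
  assert (v' = v) as ->.
  { pose proof (ext_at E Hsi) as H. rewrite trunc_lt in H by apply Hi1. congruence. }
  destruct (master_succ_set BF (ex_intro _ (trunc t i1) (conj E (tree_trunc Hp i1 Pt)))) as [t' [E' Mt']].
  exists a. split; auto. split; auto.
  exists t', v. split; auto. split; [|split; [exact (ext_at E' Hsi)|auto]].
  intros b Hbi. rewrite (ext_extends E'), trunc_lt; auto.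
  rewrite trunc_lt by auto. apply Hsa, (lt_trans Hbi Hia).
Qed.

Lemma deg_master_above_frontier_succ w lw s c :
  frontier_succ w -> seq_len lt w lw -> extends s w -> leK lw c ->
  deg lt master s c -> deg lt (dense_below w) s c.
Proof.
  intros Ww Hlw Esw Hc [a [Ha [Hca [t [v [Mt [Hb [Ht Hne]]]]]]]].
  exists a. split; auto. split; auto. exists t, v. split; auto.
  apply (master_sub_dense_below Ww Mt). intros b Hwb.
  rewrite Hb by exact (lt_leK_trans (proj1 (Hlw b) Hwb) Hc). apply Esw; auto.
Qed.

Lemma master_deg_closed s a : master s -> seq_len lt s a -> closed_in lt (deg lt master s) a.
Proof.
  intros Ms Hsa g Hg Hlim Hcof.
  pose proof (seq_len_trunc Hsa (or_introl Hg)) as Hsg.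
  destruct (node_cases (tree_trunc Hp g (master_sub_p Ms))) as [BF|Hh].
  - apply (deg_master_of_deg_p Hsa); auto. apply (tree_deg_closed Hp (master_sub_p Ms) Hsa); auto.
    intros b Hb. destruct (Hcof b Hb) as [c [Hc Hbc]]. exists c. split; auto.
    exact (deg_mono master_sub_p Hc).
  - destruct (above_frontier_has_frontier_succ Hh) as [w [Ww Ew]].
    destruct (tree_seq Hp (proj1 Ww)) as [lw Hlw].
    assert (Hlwg : lt lw g).
    { destruct (extends_seq_len Ew Hlw Hsg) as [H| ->]; auto.
      exfalso. exact (frontier_succ_not_limit Ww Hlw Hlim). }
    assert (Esw : extends s w) by exact (extends_trans (extends_trunc (s := s) (i := g)) Ew).
    assert (Hs : dense_below w s) by exact (master_sub_dense_below Ww Ms Esw).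
    apply (deg_mono (T1 := dense_below w)); [intros y Hy; exact (dense_below_sub_master Ww Hy)|].
    apply (tree_deg_closed (dense_below_in_P (proj1 Ww)) Hs Hsa); auto.
    intros b Hb. destruct (leK_max_lt Hb Hlwg) as [b' [Hb'g [Hbb' Hlwb']]].
    destruct (Hcof b' Hb'g) as [c [Hc [Hb'c Hcg]]].
    exists c. split; [|split; [exact (leK_lt_trans Hbb' Hb'c)|auto]].
    apply (deg_master_above_frontier_succ Ww Hlw Esw); auto. left. exact (leK_lt_trans Hlwb' Hb'c).
Qed.

Lemma master_in_P : in_P lt F master.
Proof.
  split; [|split; [|split; [|split; [|split; [|split; [|split]]]]]].
  - intros s Ms. exact (tree_seq Hp (master_sub_p Ms)).
  - destruct (master_long z) as [s [_ [Ms _]]]. eauto.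
  - intros s i t Ms Hr. rewrite (restr_eq_trunc Hr). apply master_trunc; auto.
  - exact master_long.
  - exact master_split.
  - exact master_succ_cases.
  - intros d s Hd Hs Hr. apply (master_limit Hd Hs). intros c Hc. exact (Hr c _ Hc (restr_trunc s c)).
  - exact master_deg_closed.
Qed.

Lemma master_le_z : le_z lt z p master.
Proof.
  split; [exact master_sub_p|]. intros s Ps O. left. split; auto. exists s. split; auto. split; auto.
  apply extends_refl.
Qed.

Lemma cone_le_dense_below r y w :
  in_P lt F r -> le master r -> r y -> frontier_succ w -> extends y w -> le (dense_below w) (cone r y).
Proof.
  intros Hr Hrm Ry Ww Eyw v [Rv Av].
  destruct (tree_seq Hr Ry) as [ly Hly]. destruct (tree_seq Hr Rv) as [lv Hlv].
  destruct (compatible_cases Hly Hlv Av) as [[E _]|[E _]].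
  - exact (master_sub_dense_below Ww (Hrm v Rv) (extends_trans E Eyw)).
  - rewrite (extends_eq_trunc E Hlv). apply tree_trunc.
    + exact (dense_below_in_P (proj1 Ww)).
    + exact (master_sub_dense_below Ww (Hrm y Ry) Eyw).
Qed.

Lemma tree_in_master_kept r :
  in_P lt F r -> le master r -> (forall y, r y -> ~ above_frontier y) -> forall y, r y -> kept y.
Proof.
  intros Hr Hrm Hlow y Ry. destruct (node_cases (master_sub_p (Hrm y Ry))) as [[|Fy]|Hy]; auto.
  2:{ exfalso. exact (Hlow y Ry Hy). }
  exfalso. destruct (tree_seq Hr Ry) as [ly Hly]. destruct (exists_succ ly) as [l1 Hl1].
  destruct (tree_extend_to_length Hr Ry Hly (or_introl (proj1 Hl1))) as [y' [Ry' [Ey' Hy']]].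
  apply (Hlow y' Ry'), (frontier_proper_ext_above Fy (master_sub_p (Hrm y' Ry')) Ey').
  intros ->. apply (lt_irrefl (a := ly)). rewrite (seq_len_unique Hly Hy') at 2. apply Hl1.
Qed.

Lemma dense_below_le_thin r k :
  in_P lt F r -> le master r -> r k ->
  (forall t1 t2, p t1 -> p t2 -> extends t1 k -> extends t2 k -> compatible t1 t2) ->
  le r (dense_below k).
Proof.
  intros Hr Hrm Rk Thin v Hv. pose proof (master_sub_p (Hrm k Rk)) as Pk.
  destruct (dense_below_cone Pk Hv) as [Pv Av].
  destruct (tree_seq Hr Rk) as [lk Hlk]. destruct (tree_seq Hp Pv) as [lv Hlv].
  destruct (compatible_cases Hlk Hlv Av) as [[E Hle]|[E _]].
  - destruct (tree_extend_to_length Hr Rk Hlk Hle) as [y [Ry [Ey Hy]]].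
    assert (Eyv : extends y v).
    { apply (compatible_extends Hlv Hy); [|right; auto].
      apply compatible_sym, Thin; auto. exact (master_sub_p (Hrm y Ry)). }
    rewrite <- (extends_same_len Eyv Hlv Hy). exact Ry.
  - rewrite (extends_eq_trunc E Hlv). apply tree_trunc; auto.
Qed.

Lemma master_predense : predense_above lt F (fun q => exists w, p w /\ q = dense_below w) master.
Proof.
  intros r Hr Hrm. destruct (classic (exists y, r y /\ above_frontier y)) as [[y [Ry Hy]]|Hlow].
  - destruct (master_above_frontier_in_dense_below (Hrm y Ry) Hy) as [w [Ww [_ Eyw]]].
    exists (dense_below w), (cone r y). split; [exists w; split; auto; apply Ww|].
    split; [apply cone_in_P; auto|]. split; [intros v [Rv _]; auto|].
    exact (cone_le_dense_below Hr Hrm Ry Ww Eyw).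
  - assert (Hkept : forall y, r y -> kept y).
    { apply (tree_in_master_kept Hr Hrm). intros y Ry Hy. apply Hlow. eauto. }
    destruct (kept_tree_has_thin_node Hr Hkept) as [k [Rk Thin]].
    pose proof (dense_below_le_thin Hr Hrm Rk Thin) as Hk.
    exists (dense_below k), (dense_below k).
    split; [exists k; split; auto; exact (master_sub_p (Hrm k Rk))|].
    split; [exact (dense_below_in_P (master_sub_p (Hrm k Rk)))|]. split; [exact Hk|intros v Hv; exact Hv].
Qed.
End Mastering.

Lemma card_le_kappa_image (S : sq K -> Prop) (e : sq K -> K) (g : sq K -> sq K -> Prop) :
  (forall s t, S s -> S t -> e s = e t -> s = t) -> card_le_kappa (fun q => exists w, S w /\ q = g w).
Proof.
  intro He. pose (pick q := epsilon (inhabits (fun _ : K => None)) (fun w => S w /\ q = g w)).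
  exists (fun q => e (pick q)). intros q1 q2 H1 H2 Heq.
  destruct (epsilon_spec (inhabits (fun _ : K => None)) _ H1) as [S1 E1].
  destruct (epsilon_spec (inhabits (fun _ : K => None)) _ H2) as [S2 E2].
  fold (pick q1) in S1, E1. fold (pick q2) in S2, E2.
  rewrite E1, E2. f_equal. apply He; auto.
Qed.
End Forcing.

Theorem lemma4p8 (K : Type) (lt : K -> K -> Prop) (F : (K -> Prop) -> Prop) :
  is_infinite_regular_cardinal lt ->
  kappa_lt_kappa_eq_kappa lt ->
  lt_kappa_complete_filter lt F ->
  forall (D : (sq K -> Prop) -> Prop), dense_in_P lt F D ->
  forall (p : sq K -> Prop), in_P lt F p ->
  forall z : K,
  exists q, in_P lt F q /\ le_z lt z p q /\
    exists D' : (sq K -> Prop) -> Prop, (forall d, D' d -> D d) /\ card_le_kappa D' /\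
               predense_above lt F D' q.
Proof.
  intros [SWO [_ [UNB [_ REG]]]] [e He] HF D HD p Hp z.
  exists (master lt p z D). split; [|split]; [eapply master_in_P; eauto|eapply master_le_z; eauto|].
  exists (fun q => exists w, p w /\ q = dense_below p D w). split; [|split].
  - intros q [w [Pw ->]]. eapply proj1, dense_below_spec; eauto.
  - apply (card_le_kappa_image (e := e)). intros s t Ps Pt. apply He; eapply tree_seq; eauto.
  - eapply master_predense; eauto.
Qed.
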